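(* Let $K_t,K_r,M_r,N_t$ be positive integers with $N_t\le K_rM_r$. Consider $K_t$ transmitters with $N_t$ antennas each and $K_r$ receivers with $M_r$ antennas each, where $\mathbf{H}_{jk}\in\mathbb{C}^{M_r\times N_t}$ denotes the channel matrix from transmitter $k$ to receiver $j$, with all entries of all channel matrices i.i.d. zero-mean unit-variance circularly symmetric complex Gaussian. Let $\kappa_t$ be an integer with $0\le \kappa_t\le K_t-1$ satisfying \[ (K_t-1)N_t\le K_r(K_t-\kappa_t)M_r<K_tN_t, \] and let $d$ be a positive integer satisfying \[ d\le K_tN_t-K_r(K_t-\kappa_t)M_r . \] Then almost surely there exist precoders $\mathbf{V}_k\in\mathbb{C}^{N_t\times d}$, $k=1,\dots,K_t$, such that each $\mathbf{V}_k$ has full column rank $d$ and \[ \dim\Big(\mathcal{C}\big(\mathbf{H}_{j1}\mathbf{V}_1,\mathbf{H}_{j2}\mathbf{V}_2,\dots,\mathbf{H}_{jK_t}\mathbf{V}_{K_t}\big)\Big)\le\kappa_t d\qquad\text{for all } j=1,\dots,K_r . \]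
   Context: $\mathcal{C}(\mathbf{A}_1,\dots,\mathbf{A}_n)$ denotes the column space of the horizontally concatenated matrix $[\mathbf{A}_1\ \mathbf{A}_2\ \cdots\ \mathbf{A}_n]$. *)

From HB Require Import structures.
From mathcomp Require Import all_boot all_order all_algebra.
Set Implicit Arguments. Unset Strict Implicit. Unset Printing Implicit Defensive.
Import Order.TTheory GRing.Theory Num.Theory.
Local Open Scope ring_scope.

Inductive mpoly (V R : Type) : Type :=
  | MPX of V
  | MPC of R
  | MPAdd of mpoly V R & mpoly V R
  | MPMul of mpoly V R & mpoly V R.

Fixpoint mpeval (V : Type) (R : pzRingType) (x : V -> R) (p : mpoly V R) : R :=
  match p with
  | MPX v => x v
  | MPC c => c
  | MPAdd p q => mpeval x p + mpeval x q
  | MPMul p q => mpeval x p * mpeval x q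
  end.

(* "P holds generically": P holds on a nonempty Zariski-open subset of R^V,
   i.e. outside the zero set of a polynomial that is not identically zero. *)
Definition generic (V : Type) (R : pzRingType) (P : (V -> R) -> Prop) : Prop :=
  exists p : mpoly V R,
    (exists x0 : V -> R, mpeval x0 p != 0) /\
    (forall x : V -> R, mpeval x p != 0 -> P x).

Definition chan (C : pzRingType) (Kr Kt Mr Nt : nat)
  (x : 'I_Kr * 'I_Kt * 'I_Mr * 'I_Nt -> C) (j : 'I_Kr) (k : 'I_Kt)
  : 'M[C]_(Mr, Nt) :=
  \matrix_(a < Mr, b < Nt) x (j, k, a, b).

(* Stack the receivers and write H_k for the (Kr Mr) x Nt channel of
   transmitter k.  If there are kt matrices Z_l and scalars E_kl with
   H_k V_k = sum_l E_kl Z_l for every k, then at each receiver all the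
   H_jk V_k lie in the span of the kt blocks of the Z_l, whence the rank bound.
   This is a linear system in (V, Z) with Kt Kr Mr equations and
   Kt Nt + kt Kr Mr unknowns, so it has K := Kt Nt - Kr (Kt - kt) Mr >= d
   independent solutions.  The adjugate of a square pivot block turns a free
   seed matrix into a solution polynomial in the channel, the E_kl and the
   seed, so a fixed d x d minor of each V_k is a polynomial.  Over an infinite
   field a product of nonzero polynomials is nonzero, so it suffices to find
   one point where the minor of a given V_beta does not vanish; after that
   the auxiliary variables are frozen.  At that point the channels are
   cyclically shifted partial identities and E_kl = t_k ^ l for distinct
   nodes t_k: the system becomes polynomial interpolation, the pivot block is
   invertible by a root count, and an explicit solution made of products of
   (X - t_k) has a diagonal nonzero minor. *)

From HB Require Import structures.
From mathcomp Require Import all_boot all_order all_algebra.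
From mathcomp Require Import zify perm.
Set Implicit Arguments. Unset Strict Implicit. Unset Printing Implicit Defensive.
Import Order.TTheory GRing.Theory Num.Theory.
Local Open Scope ring_scope.

(** * Polynomial functions *)

Lemma coef_eq0_of_roots (R : idomainType) n (c : 'I_n -> R) (rs : seq R) :
  uniq rs -> (forall l : 'I_n, (size rs <= l)%N -> c l = 0) ->
  {in rs, forall x, \sum_(l < n) x ^+ l * c l = 0} -> forall l, c l = 0.
Proof.
move=> urs hhigh hroots l.
pose P : {poly R} := \poly_(i < n) (if insub i is Some l' then c l' else 0).
have hP x : P.[x] = \sum_(l < n) x ^+ l * c l.
  rewrite (horner_coef_wide _ (size_poly _ _)); apply: eq_bigr => i _.
  by rewrite coef_poly ltn_ord valK mulrC.
have P0 : P = 0.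
  apply: (roots_geq_poly_eq0 _ urs).
    by apply/allP => x /hroots; rewrite /root hP => ->.
  apply/leq_sizeP => i hi; rewrite coef_poly; case: ltnP => // _.
  by case: insubP => // l' _ hl'; apply: hhigh; rewrite hl'.
by have := congr1 (coefp l) P0; rewrite /= coef0 coef_poly ltn_ord valK.
Qed.


Section PolynomialFunctions.
Variables (C : numClosedFieldType) (W : Type).

Definition polyfun (f : (W -> C) -> C) :=
  exists p : mpoly W C, forall y, mpeval y p = f y.

Definition nonvanishing (f : (W -> C) -> C) := exists y, f y != 0.

Lemma eq_polyfun f g : polyfun f -> f =1 g -> polyfun g.
Proof. by move=> [p hp] e; exists p => y; rewrite hp e. Qed.

Lemma polyfun_cst c : polyfun (fun _ => c).
Proof. by exists (MPC W c). Qed.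

Lemma polyfun_var w : polyfun (fun y => y w).
Proof. by exists (MPX C w). Qed.

Lemma polyfunD f g : polyfun f -> polyfun g -> polyfun (fun y => f y + g y).
Proof. by move=> [p hp] [q hq]; exists (MPAdd p q) => y /=; rewrite hp hq. Qed.

Lemma polyfunM f g : polyfun f -> polyfun g -> polyfun (fun y => f y * g y).
Proof. by move=> [p hp] [q hq]; exists (MPMul p q) => y /=; rewrite hp hq. Qed.

Lemma polyfunN f : polyfun f -> polyfun (fun y => - f y).
Proof.
by move=> hf; apply: eq_polyfun (polyfunM (polyfun_cst (-1)) hf) _ => y; rewrite mulN1r.
Qed.

Lemma polyfun_sum (I : Type) (r : seq I) (F : I -> (W -> C) -> C) :
  (forall i, polyfun (F i)) -> polyfun (fun y => \sum_(i <- r) F i y).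
Proof.
move=> hF; elim: r => [|i r ih].
  by apply: eq_polyfun (polyfun_cst 0) _ => y; rewrite big_nil.
by apply: eq_polyfun (polyfunD (hF i) ih) _ => y; rewrite big_cons.
Qed.

Lemma polyfun_prod (I : Type) (r : seq I) (F : I -> (W -> C) -> C) :
  (forall i, polyfun (F i)) -> polyfun (fun y => \prod_(i <- r) F i y).
Proof.
move=> hF; elim: r => [|i r ih].
  by apply: eq_polyfun (polyfun_cst 1) _ => y; rewrite big_nil.
by apply: eq_polyfun (polyfunM (hF i) ih) _ => y; rewrite big_cons.
Qed.

Definition polymx m n (A : (W -> C) -> 'M[C]_(m, n)) :=
  forall i j, polyfun (fun y => A y i j).

Lemma polyfun_det n (A : (W -> C) -> 'M[C]_n) :
  polymx A -> polyfun (fun y => \det (A y)).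
Proof.
move=> hA; apply: polyfun_sum => s; apply: polyfunM; first exact: polyfun_cst.
by apply: polyfun_prod => i; apply: hA.
Qed.

Lemma eq_mpeval (y1 y2 : W -> C) p : y1 =1 y2 -> mpeval y1 p = mpeval y2 p.
Proof. by move=> e; elim: p => //= [p -> q ->|p -> q ->]. Qed.

Lemma mpeval_line (p : mpoly W C) (a b : W -> C) :
  exists P : {poly C}, forall t, mpeval (fun w => a w + t * (b w - a w)) p = P.[t].
Proof.
elim: p => [v|c|p [P hP] q [Q hQ]|p [P hP] q [Q hQ]].
- exists ((a v)%:P + 'X * (b v - a v)%:P) => t.
  by rewrite /= hornerD hornerC hornerM hornerX hornerC.
- by exists c%:P => t; rewrite /= hornerC.
- by exists (P + Q) => t; rewrite /= hP hQ hornerD.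
- by exists (P * Q) => t; rewrite /= hP hQ hornerM.
Qed.

(* A nonzero polynomial has at most [size P - 1] roots, so it cannot vanish on
   the [size P] distinct naturals of the characteristic-zero field [C]. *)
Lemma poly_neq0_nonroot (P : {poly C}) : P != 0 -> exists t, P.[t] != 0.
Proof.
move=> P0; pose s : seq C := [seq i%:R | i <- iota 0 (size P)].
have [/allPn [t _ ht]|/negbNE hall] := boolP (~~ all (root P) s).
  by exists t.
case/negP: P0; apply/eqP/(roots_geq_poly_eq0 hall).
- by rewrite map_inj_uniq ?iota_uniq // => i j /eqP; rewrite eqr_nat => /eqP.
- by rewrite size_map size_iota.
Qed.

(* Restrict both polynomials to the line through a witness of each. *)
Lemma nonvanishingM f g : polyfun f -> polyfun g ->
  nonvanishing f -> nonvanishing g -> nonvanishing (fun y => f y * g y).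
Proof.
move=> [p hp] [q hq] [a ha] [b hb].
have [P hP] := mpeval_line p a b; have [Q hQ] := mpeval_line q a b.
have P0 : P.[0] != 0.
  by rewrite -hP (@eq_mpeval _ a) ?hp // => w; rewrite mul0r addr0.
have Q1 : Q.[1] != 0.
  by rewrite -hQ (@eq_mpeval _ b) ?hq // => w; rewrite mul1r addrC subrK.
have PQ0 : P * Q != 0.
  by rewrite mulf_neq0 //; [apply: contraNneq P0 | apply: contraNneq Q1] => ->;
    rewrite horner0.
have [t ht] := poly_neq0_nonroot PQ0.
by exists (fun w => a w + t * (b w - a w)); rewrite -hp -hq hP hQ -hornerM.
Qed.

Lemma nonvanishing_prod (I : Type) (r : seq I) (F : I -> (W -> C) -> C) :
  (forall i, polyfun (F i)) -> (forall i, nonvanishing (F i)) ->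
  nonvanishing (fun y => \prod_(i <- r) F i y).
Proof.
move=> hF hE; elim: r => [|i r ih].
  by exists (fun _ => 0); rewrite big_nil oner_neq0.
have [z hz] := nonvanishingM (hF i) (polyfun_prod r hF) (hE i) ih.
by exists z; rewrite big_cons.
Qed.

Lemma polymx_cst m n (A : 'M[C]_(m, n)) : polymx (fun _ => A).
Proof. by move=> i j; apply: polyfun_cst. Qed.

Lemma polymxM m n p (A : (W -> C) -> 'M[C]_(m, n)) (B : (W -> C) -> 'M[C]_(n, p)) :
  polymx A -> polymx B -> polymx (fun y => A y *m B y).
Proof.
move=> hA hB i j; apply: eq_polyfun (polyfun_sum _ (fun k =>
  polyfunM (hA i k) (hB k j))) _ => y; by rewrite mxE.
Qed.

Lemma polymxB m n (A B : (W -> C) -> 'M[C]_(m, n)) :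
  polymx A -> polymx B -> polymx (fun y => A y - B y).
Proof.
move=> hA hB i j; apply: eq_polyfun (polyfunD (hA i j) (polyfunN (hB i j))) _.
by move=> y; rewrite !mxE.
Qed.

Lemma polymxZ m n (a : (W -> C) -> C) (A : (W -> C) -> 'M[C]_(m, n)) :
  polyfun a -> polymx A -> polymx (fun y => a y *: A y).
Proof.
by move=> ha hA i j; apply: eq_polyfun (polyfunM ha (hA i j)) _ => y; rewrite !mxE.
Qed.

Lemma polymx_colsub m n k (A : (W -> C) -> 'M[C]_(m, n)) (s : 'I_k -> 'I_n) :
  polymx A -> polymx (fun y => colsub s (A y)).
Proof. by move=> hA i j; apply: eq_polyfun (hA i (s j)) _ => y; rewrite mxE. Qed.

Lemma polymx_rowsub m n k (A : (W -> C) -> 'M[C]_(m, n)) (s : 'I_k -> 'I_m) :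
  polymx A -> polymx (fun y => rowsub s (A y)).
Proof. by move=> hA i j; apply: eq_polyfun (hA (s i) j) _ => y; rewrite mxE. Qed.

Lemma polymx_adj n (A : (W -> C) -> 'M[C]_n) :
  polymx A -> polymx (fun y => \adj (A y)).
Proof.
move=> hA i j.
have hminor : polyfun (fun y => \det (row' j (col' i (A y)))).
  by apply: polyfun_det => a b; apply: eq_polyfun (hA _ _) _ => y; rewrite !mxE.
apply: eq_polyfun (polyfunM (polyfun_cst ((-1) ^+ (j + i))) hminor) _ => y.
by rewrite mxE.
Qed.

End PolynomialFunctions.

Section PartialEvaluation.
Variables (C : numClosedFieldType) (X Y : Type).

Definition join_vars (x : X -> C) (c : Y -> C) : X + Y -> C :=
  fun w => match w with inl u => x u | inr v => c v end.

Lemma polyfun_partial_eval (f : (X + Y -> C) -> C) (c : Y -> C) : polyfun f ->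
  exists q : mpoly X C, forall x, mpeval x q = f (join_vars x c).
Proof.
move=> [p hp].
suff [q hq] : exists q : mpoly X C, forall x, mpeval x q = mpeval (join_vars x c) p.
  by exists q => x; rewrite hq hp.
elim: p {hp} => [[u|v]|c0|p [P hP] q [Q hQ]|p [P hP] q [Q hQ]].
- by exists (MPX C u).
- by exists (MPC X (c v)).
- by exists (MPC X c0).
- by exists (MPAdd P Q) => x /=; rewrite hP hQ.
- by exists (MPMul P Q) => x /=; rewrite hP hQ.
Qed.

End PartialEvaluation.

Section LinearAlgebra.
Variable F : fieldType.

(* Since [A *m colsub s 1%:M = colsub s A], the adjugate of that square block
   removes from [\det (colsub s A) *: g] everything outside the kernel of [A]. *)
Definition kerproj m n p (A : 'M[F]_(m, n)) (s : 'I_m -> 'I_n) (g : 'M[F]_(n, p)) :=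
  \det (colsub s A) *: g - colsub s 1%:M *m \adj (colsub s A) *m A *m g.

Lemma mul_kerproj m n p (A : 'M[F]_(m, n)) s (g : 'M[F]_(n, p)) :
  A *m kerproj A s g = 0.
Proof.
rewrite /kerproj mulmxBr -scalemxAr !mulmxA mulmx_colsub mulmx1 mul_mx_adj.
by rewrite mul_scalar_mx -scalemxAl subrr.
Qed.

Lemma kerproj_ker m n p (A : 'M[F]_(m, n)) s (g : 'M[F]_(n, p)) :
  A *m g = 0 -> kerproj A s g = \det (colsub s A) *: g.
Proof. by move=> h; rewrite /kerproj -mulmxA h mulmx0 subr0. Qed.

Lemma det_neq0_of_ker0 m (B : 'M[F]_m) :
  (forall w : 'cV[F]_m, B *m w = 0 -> w = 0) -> \det B != 0.
Proof.
move=> hB; rewrite -unitfE -unitmxE -unitmx_tr -row_free_unit.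
apply: inj_row_free => v hv; apply: trmx_inj; rewrite trmx0; apply: hB.
by rewrite -[B]trmxK -trmx_mul hv trmx0.
Qed.

Lemma mxrank_of_minor n d (V : 'M[F]_(n, d)) (r : 'I_d -> 'I_n) :
  \det (rowsub r V) != 0 -> \rank V = d.
Proof.
move=> hr; apply/eqP; rewrite eqn_leq rank_leq_col /=.
rewrite -{1}(@mxrank_unit _ _ (rowsub r V)) ?mxrankS ?rowsub_sub //.
by rewrite unitmxE unitfE.
Qed.

Lemma mxrank_sum_leq p q n (A : 'I_n -> 'M[F]_(p, q)) :
  (\rank (\sum_(l < n) A l)%R <= \sum_(l < n) \rank (A l))%N.
Proof.
apply: (big_ind2 (fun (B : 'M[F]_(p, q)) r => \rank B <= r)%N) => //.
- by rewrite mxrank0.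
- by move=> B1 r1 B2 r2 h1 h2; apply: leq_trans (mxrank_add _ _) (leq_add h1 h2).
Qed.

Lemma mxrank_mxrow_mull m q T d (Z : 'M[F]_(m, q)) (E : 'I_T -> 'M[F]_(q, d)) :
  (\rank (\mxrow_(k < T) (Z *m E k)) <= q)%N.
Proof.
by rewrite -mul_mxrow; apply: leq_trans (mxrankM_maxl _ _) (rank_leq_col _).
Qed.

End LinearAlgebra.

(** * The alignment system *)

Lemma sum_enum_val (R : nmodType) (T : finType) (F : T -> R) :
  \sum_(i < #|{:T}|) F (enum_val i) = \sum_x F x.
Proof. by rewrite -big_enum_val. Qed.

(* The antennas of all receivers are stacked into [Kr * Mr] rows along
   [mxvec_index]; [rx_antenna] recovers the receiver and the antenna. *)
Definition rx_antenna Kr Mr (m : 'I_(Kr * Mr)) : 'I_Kr * 'I_Mr :=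
  enum_val (cast_ord (esym (mxvec_cast Kr Mr)) m).

Lemma rx_antenna_index Kr Mr (j : 'I_Kr) (a : 'I_Mr) :
  rx_antenna (mxvec_index j a) = (j, a).
Proof. by rewrite /rx_antenna /mxvec_index cast_ordK enum_rankK. Qed.

Lemma index_rx_antenna Kr Mr (m : 'I_(Kr * Mr)) :
  mxvec_index (rx_antenna m).1 (rx_antenna m).2 = m.
Proof.
by rewrite /rx_antenna /mxvec_index -surjective_pairing enum_valK cast_ordKV.
Qed.

Section AlignmentSystem.
Variables (C : numClosedFieldType) (Kt Kr Mr Nt kt d : nat).

Local Notation M := (Kr * Mr)%N.

(* The unknowns are the entries of the precoders [V_k] ([inl]) and of [kt]
   matrices [Z_l] of size [M x d] shared by all transmitters ([inr]); the
   equation of row [(k, m)] is row [m] of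
   [col_mx (H_1k, ..., H_(Kr)k) *m V_k = \sum_l E_kl *: Z_l]. *)
Definition sys_row := ('I_Kt * 'I_M)%type.
Definition sys_col := (('I_Kt * 'I_Nt) + ('I_kt * 'I_M))%type.

(* The variables are the channel entries, the coefficients [E_kl], and the
   entries of a seed matrix that is projected onto the solution space. *)
Definition sys_var :=
  (('I_Kr * 'I_Kt * 'I_Mr * 'I_Nt) + (('I_Kt * 'I_kt) + (sys_col * 'I_d)))%type.

Definition sys_entry (y : sys_var -> C) (r : sys_row) (c : sys_col) : C :=
  match c with
  | inl (k, b) => if r.1 == k then y (inl ((rx_antenna r.2).1, k, (rx_antenna r.2).2, b))
                  else 0
  | inr (l, m) => if r.2 == m then - y (inr (inl (r.1, l))) else 0
  end.

Definition sys_mx (y : sys_var -> C) : 'M[C]_(#|{:sys_row}|, #|{:sys_col}|) :=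
  \matrix_(i, c) sys_entry y (enum_val i) (enum_val c).

Definition seed_mx (y : sys_var -> C) : 'M[C]_(#|{:sys_col}|, d) :=
  \matrix_(c, t) y (inr (inr (enum_val c, t))).

Lemma mul_sys_mx y p (U : 'M[C]_(#|{:sys_col}|, p)) k m t :
  (sys_mx y *m U) (enum_rank ((k, m) : sys_row)) t =
    \sum_(b < Nt) y (inl ((rx_antenna m).1, k, (rx_antenna m).2, b))
                  * U (enum_rank (inl (k, b) : sys_col)) t
  - \sum_(l < kt) y (inr (inl (k, l))) * U (enum_rank (inr (l, m) : sys_col)) t.
Proof.
rewrite mxE; transitivity (\sum_(c : sys_col) sys_entry y (k, m) c * U (enum_rank c) t).
  by rewrite -[RHS]sum_enum_val; apply: eq_bigr => c _; rewrite mxE enum_valK enum_rankK.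
rewrite (big_sumType _ predT) /=; congr (_ + _).
  rewrite (eq_bigr (fun p => sys_entry y (k, m) (inl (p.1, p.2))
                             * U (enum_rank (inl (p.1, p.2) : sys_col)) t)); last by case.
  rewrite -(pair_bigA _ (fun k' b => sys_entry y (k, m) (inl (k', b))
                                     * U (enum_rank (inl (k', b) : sys_col)) t)).
  rewrite (bigD1 k) //= eqxx [X in _ + X]big1 ?addr0 // => k' nk.
  by apply: big1 => b _; rewrite /= eq_sym (negbTE nk) mul0r.
rewrite (eq_bigr (fun p => sys_entry y (k, m) (inr (p.1, p.2))
                           * U (enum_rank (inr (p.1, p.2) : sys_col)) t)); last by case.
rewrite -(pair_bigA _ (fun l m' => sys_entry y (k, m) (inr (l, m'))
                                   * U (enum_rank (inr (l, m') : sys_col)) t)).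
rewrite -sumrN; apply: eq_bigr => l _.
rewrite (bigD1 m) //= eqxx [X in _ + X]big1 ?addr0 ?mulNr // => m' nm.
by rewrite eq_sym (negbTE nm) mul0r.
Qed.

Variables (s : 'I_#|{:sys_row}| -> 'I_#|{:sys_col}|) (r : 'I_d -> 'I_Nt).

Definition solution y := kerproj (sys_mx y) s (seed_mx y).

Definition precoder y (k : 'I_Kt) : 'M[C]_(Nt, d) :=
  \matrix_(b, t) solution y (enum_rank (inl (k, b) : sys_col)) t.

Definition shared y (j : 'I_Kr) (l : 'I_kt) : 'M[C]_(Mr, d) :=
  \matrix_(a, t) solution y (enum_rank (inr (l, mxvec_index j a) : sys_col)) t.

Definition precoder_minor y k := \det (rowsub r (precoder y k)).

Lemma polymx_sys_mx : polymx sys_mx.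
Proof.
move=> i j.
apply: (@eq_polyfun _ _ (fun y => sys_entry y (enum_val i) (enum_val j))); last first.
  by move=> y; rewrite mxE.
case: (enum_val j) => [[k b]|[l m]] /=; case: eqP => _;
  by [apply: polyfun_var | apply: polyfun_cst | apply/polyfunN/polyfun_var].
Qed.

Lemma polymx_seed_mx : polymx seed_mx.
Proof.
by move=> i j; apply: eq_polyfun (polyfun_var _ (inr (inr (enum_val i, j)))) _ => y;
  rewrite mxE.
Qed.

Lemma polyfun_precoder_minor k : polyfun (fun y => precoder_minor y k).
Proof.
apply/polyfun_det/polymx_rowsub.
have hsol : polymx solution.
  apply: polymxB; first exact/polymxZ/polymx_seed_mx/polyfun_det/polymx_colsub/polymx_sys_mx.
  apply/polymxM/polymx_seed_mx/polymxM/polymx_sys_mx/polymxM/polymx_adj/polymx_colsub.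
    exact: polymx_cst.
  exact: polymx_sys_mx.
by move=> i j; apply: eq_polyfun (hsol (enum_rank (inl (k, i) : sys_col)) j) _ => y;
  rewrite [RHS]mxE.
Qed.

Lemma chan_mul_precoder y j k :
  chan (fun v => y (inl v)) j k *m precoder y k
    = \sum_(l < kt) shared y j l *m (y (inr (inl (k, l))))%:M.
Proof.
apply/matrixP => a t; rewrite mxE summxE.
have /eqP := mul_sys_mx y (solution y) k (mxvec_index j a) t.
rewrite mul_kerproj mxE eq_sym subr_eq0 rx_antenna_index => /eqP /= hrow.
rewrite (eq_bigr (fun b => y (inl (j, k, a, b)) * solution y (enum_rank (inl (k, b) : sys_col)) t));
  last by move=> b _; rewrite !mxE.
by rewrite hrow; apply: eq_bigr => l _; rewrite mul_mx_scalar !mxE mulrC.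
Qed.

Lemma mxrank_aligned y j :
  (\rank (\mxrow_(k < Kt) (chan (fun v => y (inl v)) j k *m precoder y k)) <= kt * d)%N.
Proof.
rewrite (eq_mxrow (chan_mul_precoder y j)) mxrow_sum.
apply: leq_trans (mxrank_sum_leq _) _.
rewrite -[X in (_ <= X * d)%N]card_ord -sum_nat_const; apply: leq_sum => l _.
exact: mxrank_mxrow_mull.
Qed.

Lemma generic_alignment :
  (forall k, nonvanishing (fun y => precoder_minor y k)) ->
  generic (fun x : 'I_Kr * 'I_Kt * 'I_Mr * 'I_Nt -> C =>
    exists V : 'I_Kt -> 'M[C]_(Nt, d),
      (forall k : 'I_Kt, \rank (V k) = d) /\
      (forall j : 'I_Kr,
         (\rank (\mxrow_(k < Kt) (chan x j k *m V k)) <= kt * d)%N)).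
Proof.
move=> hnz.
have hP := polyfun_prod (enum 'I_Kt) polyfun_precoder_minor.
have [y0 hy0] := nonvanishing_prod (enum 'I_Kt) polyfun_precoder_minor hnz.
have [q hq] := polyfun_partial_eval (fun w => y0 (inr w)) hP.
exists q; split.
  exists (fun u => y0 (inl u)); rewrite hq.
  have [p hp] := hP; rewrite -hp (@eq_mpeval _ _ _ y0) ?hp //; by case.
move=> x hx; pose y := join_vars x (fun w => y0 (inr w)).
have hk k : precoder_minor y k != 0.
  by move: hx; rewrite hq prodf_seq_neq0 => /allP /(_ k); rewrite mem_enum; apply.
exists (precoder y); split => [k|j]; first exact: mxrank_of_minor (hk k).
exact: mxrank_aligned.
Qed.

End AlignmentSystem.

(** * A point where a precoder has full rank *)

Section SpecialPoint.
Variables Kt Kr Mr Nt kt d : nat.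
Hypotheses (hKt : (0 < Kt)%N) (hNt : (0 < Nt)%N) (hNtKM : (Nt <= Kr * Mr)%N)
  (hkt : (kt <= Kt - 1)%N)
  (hlow : ((Kt - 1) * Nt <= Kr * (Kt - kt) * Mr)%N)
  (hup : (Kr * (Kt - kt) * Mr < Kt * Nt)%N)
  (hdle : (d <= Kt * Nt - Kr * (Kt - kt) * Mr)%N).

Local Notation M := (Kr * Mr)%N.
Local Notation e := (Kr * Mr - Nt)%N.
Local Notation K := (Kt * Nt - Kr * (Kt - kt) * Mr)%N.

Lemma Kr_Kt_Mr : (Kr * (Kt - kt) * Mr = (Kt - kt) * M)%N.
Proof. by rewrite -mulnA mulnCA. Qed.

Lemma kt_gt0 : (0 < kt)%N.
Proof.
have : (Kt * Nt <= Kt * M)%N by rewrite leq_mul2l hNtKM orbT.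
by case: kt hup => [|k] //; rewrite subn0; nia.
Qed.

Lemma K_gt0 : (0 < K)%N.
Proof. by rewrite subn_gt0. Qed.

Lemma K_leq_Nt : (K <= Nt)%N.
Proof.
have : (Kt * Nt <= (Kt - 1) * Nt + Nt)%N by rewrite -mulSnr; nia.
by rewrite leq_subLR; lia.
Qed.

Lemma K_leq_M : (K <= M)%N.
Proof. exact: leq_trans K_leq_Nt hNtKM. Qed.

Lemma Kt_e_K : (Kt * e + K = kt * M)%N.
Proof.
have := kt_gt0; rewrite Kr_Kt_Mr mulnBr => hkt0.
have h1 : ((Kt - kt) * M + kt * M = Kt * M)%N by rewrite -mulnDl subnK //; lia.
have h2 : ((Kt - kt) * M <= Kt * Nt)%N by rewrite -Kr_Kt_Mr ltnW.
have h3 : (Kt * Nt <= Kt * M)%N by rewrite leq_mul2l hNtKM orbT.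
lia.
Qed.

Lemma e_gt0 : (1 < kt)%N -> (0 < e)%N.
Proof.
move=> hkt1; rewrite subn_gt0 ltn_neqAle hNtKM andbT; apply/negP => /eqP hNM.
by move: hlow; rewrite Kr_Kt_Mr -hNM leq_mul2r (negbTE (lt0n_neq0 hNt)) /=; lia.
Qed.

Local Notation sys_row := (@sys_row Kt Kr Mr).
Local Notation sys_col := (@sys_col Kt Kr Mr Nt kt).

(* The [K] columns left out, those of the last shared layer on the last [K]
   stacked antennas, carry the [K]-dimensional solution space. *)
Definition pivot_col : pred sys_col := fun c =>
  match c with inl _ => true | inr (l, m) => ((l < kt.-1) || (m < M - K))%N end.

Lemma sum_ord_ltn (X n : nat) : (\sum_(i < n) (i < X) = minn X n)%N.
Proof.
elim: n => [|n ih]; first by rewrite big_ord0 minn0.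
by rewrite big_ord_recr /= ih; case: (ltnP n X) => h /=; lia.
Qed.

Lemma card_pivot_shared (l : 'I_kt) :
  (\sum_(m < M) pivot_col (inr (l, m)) = (l < kt.-1) * K + (M - K))%N.
Proof.
have := K_leq_M; have [hl|hl] /= := ltnP l kt.-1 => hKM.
  by rewrite (eq_bigr (fun=> 1%N)) => [|m _]; rewrite ?hl // sum_nat_const card_ord; lia.
rewrite (eq_bigr (fun m : 'I_M => nat_of_bool (m < M - K)%N)).
  by rewrite sum_ord_ltn; lia.
by move=> m _; rewrite /= ltnNge hl.
Qed.

Lemma card_pivot_col : (#|{:sys_row}| <= #|pivot_col|)%N.
Proof.
rewrite card_prod !card_ord -sum1_card big_mkcond /= (big_sumType _ predT) /=.
rewrite sum_nat_const card_prod !card_ord muln1.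
rewrite (eq_bigr (fun p => nat_of_bool (pivot_col (inr (p.1, p.2))))); last first.
  by case=> l m _; rewrite unfold_in /=; case: (_ || _).
rewrite -(pair_bigA _ (fun l m => nat_of_bool (pivot_col (inr (l, m))))) /=.
rewrite (eq_bigr _ (fun l _ => card_pivot_shared l)) big_split /= -big_distrl /=.
rewrite sum_ord_ltn sum_nat_const card_ord.
have hkt0 := kt_gt0; have hKM := K_leq_M.
have -> : minn kt.-1 kt = kt.-1 by lia.
have f1 : (kt.-1 * K + K = kt * K)%N by rewrite addnC -mulSn prednK.
have f2 : (kt * (M - K) + kt * K = kt * M)%N by rewrite -mulnDr subnK.
have f3 : (Kt * e + Kt * Nt = Kt * M)%N by rewrite -mulnDr subnK.
move: f1 f2 f3 Kt_e_K; move: (kt.-1 * K)%N (kt * K)%N (kt * (M - K))%N (Kt * e)%N.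
move: (kt * M)%N (Kt * Nt)%N (Kt * M)%N; lia.
Qed.

Definition pivots (i : 'I_#|{:sys_row}|) : 'I_#|{:sys_col}| :=
  enum_rank (enum_val (widen_ord card_pivot_col i)).

Lemma pivotsP i : pivot_col (enum_val (pivots i)).
Proof. by rewrite /pivots enum_rankK; apply: enum_valP. Qed.

Lemma pivots_inj : injective pivots.
Proof.
move=> i1 i2 /enum_rank_inj /enum_val_inj /(congr1 val) /= h; exact: val_inj.
Qed.

Definition minor_rows (t : 'I_d) : 'I_Nt := insubd (Ordinal hNt) (Nt - K + t)%N.

Lemma M_gt0 : (0 < M)%N.
Proof. exact: leq_trans hNt hNtKM. Qed.

Variable beta : 'I_Kt.

(* At the special point transmitters are relabelled so that [beta] comes
   first; antenna [b] of the transmitter in slot [s] is wired to the stacked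
   receive antenna [(s + 1) e + b] modulo [M]. *)
Definition slot (k : 'I_Kt) : nat := tperm beta (Ordinal hKt) k.

Lemma slot_beta : slot beta = 0%N.
Proof. by rewrite /slot tpermL. Qed.

Lemma slot_onto v : (v < Kt)%N -> exists k, slot k = v.
Proof. by move=> hv; exists (tperm beta (Ordinal hKt) (Ordinal hv)); rewrite /slot tpermK. Qed.

Definition feed (k : 'I_Kt) (b : nat) : nat := (((slot k).+1 * e + b) %% M)%N.

Lemma feed_lt k b : (feed k b < M)%N.
Proof. exact/ltn_pmod/M_gt0. Qed.

Lemma feed_inj k b1 b2 : (b1 < M)%N -> (b2 < M)%N -> feed k b1 = feed k b2 -> b1 = b2.
Proof. by move=> h1 h2 /eqP; rewrite /feed eqn_modDl !modn_small // => /eqP. Qed.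

Lemma feed_onto k m : (m < M)%N -> exists2 b, (b < M)%N & feed k b = m.
Proof.
move=> hm; set X := ((slot k).+1 * e)%N.
have hX := divn_eq X M; have hXm := ltn_pmod X M_gt0.
exists ((m + (M - X %% M)) %% M)%N; first exact/ltn_pmod/M_gt0.
rewrite /feed -/X modnDmr.
have -> : (X + (m + (M - X %% M)) = (X %/ M).+1 * M + m)%N by rewrite {1}hX mulSn; lia.
by rewrite modnMDl modn_small.
Qed.

(* Cut the positions [m + j M] (row [m] on layer [j]) into blocks of length
   [e], one per slot: transmitter [k] feeds the [Nt] positions right after its
   own block, so it misses the rows of all positions inside that block. *)
Lemma feed_layer_neq k (m j : nat) : (m < M)%N -> (m + j * M < Kt * e)%N ->
  slot k = ((m + j * M) %/ e)%N -> forall b, (b < Nt)%N -> feed k b != m.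
Proof.
move=> hm hP hk b hb; apply/eqP => hfeed.
have he : (0 < e)%N by case: (posnP e) hP => // ->; rewrite muln0.
set P := (m + j * M)%N.
have hPe := divn_eq P e; have hPr := ltn_pmod P he.
have hPM : (P %% M = m)%N by rewrite /P addnC modnMDl modn_small.
move: hfeed; rewrite /feed hk.
have -> : ((P %/ e).+1 * e + b = P %/ e * e + (e + b))%N by rewrite mulSn; lia.
move=> h1.
have : ((P %/ e * e + (e + b)) %% M = (P %/ e * e + P %% e) %% M)%N by rewrite h1 -hPe hPM.
have h2 : (e + b < M)%N by rewrite -ltn_subRL subKn.
have h3 : (P %% e < M)%N by apply: leq_trans hPr (leq_subr _ _).
move/eqP; rewrite eqn_modDl (modn_small h2) (modn_small h3) => /eqP h.
by move: hPr; rewrite -h ltnNge leq_addr.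
Qed.

(* Row [m] meets [layers m] pivot columns of shared unknowns. *)
Definition layers (m : nat) : nat := if (m < M - K)%N then kt else kt.-1.

Lemma layer_bound (m : 'I_M) j : (j < layers m)%N -> (m + j * M < Kt * e)%N.
Proof.
have hm := ltn_ord m; have hKM := K_leq_M; have hkt0 := kt_gt0; have hTe := Kt_e_K.
have f : (kt.-1 * M + M = kt * M)%N by rewrite addnC -mulSn prednK.
rewrite /layers; case: ifP => hmK hj.
  have : (j * M <= kt.-1 * M)%N by rewrite leq_mul2r; apply/orP; right; lia.
  move: hTe f; move: (j * M)%N (kt.-1 * M)%N (kt * M)%N (Kt * e)%N; lia.
have hk2 : (kt.-1 = (kt.-1).-1.+1)%N by lia.
have : (j * M <= (kt.-1).-1 * M)%N by rewrite leq_mul2r; apply/orP; right; lia.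
have : ((kt.-1).-1 * M + M = kt.-1 * M)%N by rewrite addnC -mulSn -hk2.
move: hTe f; move: (j * M)%N ((kt.-1).-1 * M)%N (kt.-1 * M)%N (kt * M)%N (Kt * e)%N; lia.
Qed.

Variable C : numClosedFieldType.

Definition node (k : 'I_Kt) : C := (slot k).+1%:R.

Definition layer_roots (m : nat) : seq C :=
  [seq ((m + j * M) %/ e).+1%:R | j <- iota 0 (layers m)].

Lemma uniq_layer_roots (m : 'I_M) : uniq (layer_roots m).
Proof.
rewrite map_inj_in_uniq ?iota_uniq // => j1 j2.
rewrite !mem_iota !add0n => /layer_bound h1 /layer_bound h2 /eqP.
rewrite eqr_nat eqSS => /eqP h12.
have he : (0 < e)%N by case: (posnP e) h1 => // ->; rewrite muln0.
have heM : (e <= M)%N by lia.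
suff mono a b : (a < b)%N -> ((m + a * M) %/ e < (m + b * M) %/ e)%N.
  by case: (ltngtP j1 j2) => // h; have := mono _ _ h; rewrite h12 ltnn.
move=> hab; have hM : (a * M + M <= b * M)%N by rewrite addnC -mulSn leq_mul2r hab orbT.
have : (m + a * M + e <= m + b * M)%N.
  by move: hM heM; clear; move: (a * M)%N (b * M)%N; lia.
by move/(leq_div2r e); rewrite divnDr ?dvdnn // divnn he addn1.
Qed.

Lemma layer_rootsP (m : 'I_M) x : x \in layer_roots m ->
  exists2 k, x = node k & forall b, (b < Nt)%N -> feed k b != m.
Proof.
case/mapP => j; rewrite mem_iota add0n => /layer_bound hj ->.
have he : (0 < e)%N by case: (posnP e) hj => // ->; rewrite muln0.
have [k hk] : exists k, slot k = ((m + j * M) %/ e)%N by apply: slot_onto; rewrite ltn_divLR.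
by exists k; [rewrite /node hk | apply: feed_layer_neq (ltn_ord m) hj hk].
Qed.

Definition node_poly (m : nat) : {poly C} := \prod_(r <- layer_roots m) ('X - r%:P).

Lemma size_node_poly m : (M - K <= m)%N -> size (node_poly m) = kt.
Proof.
move=> hm; rewrite size_prod_XsubC size_map size_iota /layers (ltnNge m) hm /=.
exact/prednK/kt_gt0.
Qed.

Lemma node_poly_root k (m c : nat) : (M - K <= m < M)%N -> (Nt <= c < M)%N ->
  feed k c = m -> (node_poly m).[node k] = 0.
Proof.
move=> /andP [hKm hm] /andP [hNc hc] hfeed; apply/rootP; rewrite root_prod_XsubC.
have hTe := Kt_e_K; have hkt0 := kt_gt0.
have he : (0 < e)%N by lia.
set P := (slot k * e + (c - Nt))%N.
have hPM : (P %% M = m)%N.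
  rewrite -hfeed /feed (_ : (slot k).+1 * e + c = P + M)%N ?modnDr //.
  by rewrite /P mulSn; lia.
have hPlt : (P < Kt * e)%N.
  apply: (@leq_trans ((slot k).+1 * e)); first by rewrite /P mulSn; lia.
  by rewrite leq_mul2r ltn_ord orbT.
have hPe := divn_eq P M; set j := (P %/ M)%N.
have hj : (j < kt.-1)%N.
  have : (j * M < kt.-1 * M)%N.
    rewrite (_ : kt.-1 * M = kt * M - M)%N; first by rewrite -hTe; lia.
    by rewrite -subn1 mulnBl mul1n.
  by rewrite ltn_mul2r => /andP [].
apply/mapP; exists j; first by rewrite mem_iota add0n /layers (ltnNge m) hKm.
rewrite (_ : m + j * M = P)%N; last by rewrite [RHS]hPe hPM addnC.
by rewrite /node /P divnMDl // divn_small ?addn0 //; lia.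
Qed.

Local Notation sys_var := (@sys_var Kt Kr Mr Nt kt d).

Definition kernel_seed (c : sys_col) (t : 'I_d) : C :=
  match c with
  | inl (k, b) => (feed k b == M - K + t)%N%:R * (node_poly (M - K + t)).[node k]
  | inr (l, m) => (val m == M - K + t)%N%:R * (node_poly (M - K + t))`_l
  end.

Definition special_point (w : sys_var) : C :=
  match w with
  | inl (j, k, a, b) => (mxvec_index j a == feed k b :> nat)%:R
  | inr (inl (k, l)) => node k ^+ l
  | inr (inr (c, t)) => kernel_seed c t
  end.

Lemma mul_special_sys_mx p (U : 'M[C]_(#|{:sys_col}|, p)) k (m : 'I_M) t :
  (sys_mx special_point *m U) (enum_rank ((k, m) : sys_row)) t =
    \sum_(b < Nt) (m == feed k b :> nat)%:R * U (enum_rank (inl (k, b) : sys_col)) t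
  - \sum_(l < kt) node k ^+ l * U (enum_rank (inr (l, m) : sys_col)) t.
Proof.
by rewrite mul_sys_mx; congr (_ - _); apply: eq_bigr => b _; rewrite /special_point index_rx_antenna.
Qed.

Lemma special_seed_ker : sys_mx special_point *m seed_mx special_point = 0.
Proof.
apply/matrixP => i t; rewrite [RHS]mxE -(enum_valK i); case: (enum_val i) => k m.
rewrite mul_special_sys_mx.
have hseed c : seed_mx special_point (enum_rank c) t = kernel_seed c t.
  by rewrite mxE enum_rankK.
rewrite (eq_bigr (fun b : 'I_Nt => (m == feed k b :> nat)%:R * kernel_seed (inl (k, b)) t));
  last by move=> b _; rewrite hseed.
rewrite (eq_bigr (fun l : 'I_kt => node k ^+ l * kernel_seed (inr (l, m)) t));
  last by move=> l _; rewrite hseed.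
rewrite /kernel_seed /=; set r := (M - K + t)%N.
have [emr|nmr] := eqVneq (val m) r; last first.
  rewrite !big1 ?subrr // => [l _|b _]; first by rewrite mul0r mulr0.
  by case: eqP => [e1|]; rewrite ?mul0r // -e1 (negbTE nmr) mul0r mulr0.
have ht : (t < K)%N by apply: leq_trans hdle.
have hrM : (M - K <= r < M)%N by rewrite leq_addr /=; have := K_leq_M; lia.
rewrite emr.
have -> : \sum_(l < kt) node k ^+ l * (true%:R * (node_poly r)`_l) = (node_poly r).[node k].
  rewrite (horner_coef_wide _ (eq_leq (size_node_poly (proj1 (andP hrM))))).
  by apply: eq_bigr => l _; rewrite mul1r mulrC.
have [b hb hfeed] := feed_onto k (proj2 (andP hrM)).
have [hbN|hNb] := ltnP b Nt.
  rewrite (bigD1 (Ordinal hbN)) //= hfeed eqxx !mul1r big1 ?addr0 ?subrr //.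
  move=> b' /eqP nb'; case: eqP => [e1|]; last by rewrite mul0r.
  case: nb'; apply/val_inj/(@feed_inj k) => //=; last by rewrite hfeed.
  exact: leq_trans (ltn_ord b') hNtKM.
rewrite (node_poly_root (c := b)) ?hNb ?big1 ?subrr // => b' _.
by rewrite !mulr0.
Qed.

Section PivotKernel.
Variable u : 'cV[C]_#|{:sys_col}|.
Hypothesis hu : sys_mx special_point *m u = 0.

(* For each row [m] the shared entries are the coefficients of a polynomial
   of degree less than [layers m] (the last coefficient is a non-pivot when
   [m >= M - K]) vanishing at the [layers m] distinct nodes [layer_roots m]. *)
Lemma special_ker_shared :
  (forall c, ~~ pivot_col c -> u (enum_rank c) 0 = 0) ->
  forall l m, u (enum_rank (inr (l, m) : sys_col)) 0 = 0.
Proof.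
move=> hnp l m.
apply: (coef_eq0_of_roots (c := fun l => u (enum_rank (inr (l, m) : sys_col)) 0)
         (uniq_layer_roots m)) => [l' hl'|x /layer_rootsP [k -> hmiss]].
  apply: hnp; move: hl'; rewrite size_map size_iota /layers /=.
  by case: ifP => hm hl'; [have := ltn_ord l'; lia | rewrite ltnNge hl'].
have := mul_special_sys_mx u k m 0; rewrite hu mxE big1 => [|b _].
  by move/eqP; rewrite sub0r eq_sym oppr_eq0 => /eqP.
by rewrite eq_sym (negbTE (hmiss b (ltn_ord b))) mul0r.
Qed.

Lemma special_ker_precoder :
  (forall l m, u (enum_rank (inr (l, m) : sys_col)) 0 = 0) ->
  forall k b, u (enum_rank (inl (k, b) : sys_col)) 0 = 0.
Proof.
move=> hz k b; have := mul_special_sys_mx u k (Ordinal (feed_lt k b)) 0.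
rewrite hu mxE [X in _ - X]big1 => [|l _]; last by rewrite hz mulr0.
rewrite subr0 (bigD1 b) //= eqxx mul1r big1 ?addr0 => [->//|b' nb].
case: eqP => [e1|]; last by rewrite mul0r.
by case/eqP: nb; apply/val_inj/(@feed_inj k) => //; apply: leq_trans (ltn_ord _) hNtKM.
Qed.

End PivotKernel.

Lemma special_pivot_det : \det (colsub pivots (sys_mx special_point)) != 0.
Proof.
apply: det_neq0_of_ker0 => w hw.
set u := colsub pivots 1%:M *m w.
have hu : sys_mx special_point *m u = 0 by rewrite /u mulmxA mulmx_colsub mulmx1.
have hnp c : ~~ pivot_col c -> u (enum_rank c) 0 = 0.
  move=> hc; rewrite /u mxE big1 // => i _; rewrite !mxE.
  case: eqP => [hs|]; last by rewrite mul0r.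
  by move: (pivotsP i); rewrite -hs enum_rankK (negbTE hc).
have hz := special_ker_shared hu hnp; have hv := special_ker_precoder hu hz.
have u0 : u = 0.
  apply/matrixP => c j; rewrite (ord1 j) [RHS]mxE -(enum_valK c).
  by case: (enum_val c) => [[k b]|[l m]]; [exact: hv | exact: hz].
apply/matrixP => i j; rewrite (ord1 j) [RHS]mxE.
have : u (pivots i) 0 = w i 0.
  rewrite /u mxE (bigD1 i) //= !mxE eqxx mul1r big1 ?addr0 // => i' ni; rewrite !mxE.
  by case: eqP => [/pivots_inj e1|]; [rewrite e1 eqxx in ni | rewrite mul0r].
by rewrite u0 mxE => <-.
Qed.

Lemma node_poly_beta_neq0 (t : 'I_d) : (node_poly (M - K + t)).[node beta] != 0.
Proof.
rewrite -rootE root_prod_XsubC /node slot_beta; apply/negP => /mapP [j].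
rewrite mem_iota add0n /layers (ltnNge (M - K + t)) leq_addr /= => hj /eqP.
rewrite eqr_nat eqSS eq_sym => /eqP h0.
have he : (0 < e)%N by apply: e_gt0; lia.
have := K_leq_Nt; have := K_leq_M => hKM hKN.
suff : (0 < (M - K + t + j * M) %/ e)%N by rewrite h0.
by rewrite divn_gt0 //; lia.
Qed.

Lemma feed_beta_minor_rows (t : 'I_d) : feed beta (minor_rows t) = (M - K + t)%N.
Proof.
have ht : (t < K)%N by apply: leq_trans hdle.
have := K_leq_Nt; have := K_gt0 => hK0 hKN.
have hr : val (minor_rows t) = (Nt - K + t)%N by rewrite val_insubd; case: ifP => //; lia.
rewrite /feed hr slot_beta mul1n modn_small; lia.
Qed.

Lemma special_precoder_minor :
  precoder_minor pivots minor_rows special_point beta != 0.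
Proof.
rewrite /precoder_minor; set D := \det (colsub pivots (sys_mx special_point)).
have hsol : solution pivots special_point = D *: seed_mx special_point.
  by rewrite /solution kerproj_ker // special_seed_ker.
have -> : rowsub minor_rows (precoder pivots special_point beta) =
    diag_mx (\row_(t < d) (D * (node_poly (M - K + t)).[node beta])).
  apply/matrixP => t1 t2; rewrite [LHS]mxE [LHS]mxE hsol [LHS]mxE [X in D * X]mxE enum_rankK.
  rewrite [RHS]mxE [X in X *+ _]mxE /= feed_beta_minor_rows.
  rewrite eqn_add2l; have [<-|n12] := eqVneq t1 t2; first by rewrite eqxx mul1r mulr1n.
  by rewrite (_ : (t1 == t2 :> nat) = false) ?(negbTE n12) ?mul0r ?mulr0 //; apply/negbTE.
rewrite det_diag prodf_seq_neq0; apply/allP => t _; rewrite mxE mulf_neq0 //.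
  exact: special_pivot_det.
exact: node_poly_beta_neq0.
Qed.

End SpecialPoint.

Unset Implicit Arguments.

Theorem proposition1 (C : numClosedFieldType) (Kt Kr Mr Nt kt d : nat)
  (hKt : (0 < Kt)%N) (hKr : (0 < Kr)%N) (hMr : (0 < Mr)%N) (hNt : (0 < Nt)%N)
  (hNtKM : (Nt <= Kr * Mr)%N)
  (hkt : (kt <= Kt - 1)%N)
  (hlow : ((Kt - 1) * Nt <= Kr * (Kt - kt) * Mr)%N)
  (hup : (Kr * (Kt - kt) * Mr < Kt * Nt)%N)
  (hd : (0 < d)%N)
  (hdle : (d <= Kt * Nt - Kr * (Kt - kt) * Mr)%N) :
  generic (fun x : 'I_Kr * 'I_Kt * 'I_Mr * 'I_Nt -> C =>
    exists V : 'I_Kt -> 'M[C]_(Nt, d),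
      (forall k : 'I_Kt, \rank (V k) = d) /\
      (forall j : 'I_Kr,
         (\rank (\mxrow_(k < Kt) (chan x j k *m V k)) <= kt * d)%N)).
Proof.
apply: generic_alignment => k; exists (special_point hKt k C).
exact: special_precoder_minor.
Qed.
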